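(* Let $a,b$ be positive integers. A positive integer $p$ is the period of some position of the parallel chip-firing game on $K_{a,b}$ if and only if $p\in\{i: 1\le i\le\min(a,b)\}\cup\{2i: 1\le i\le\min(a,b)\}$.
   Context: Parallel chip-firing game: a position $\sigma$ assigns a nonnegative integer to each vertex; in each step every vertex $v$ with $\sigma(v)\ge\deg(v)$ simultaneously sends one chip to each neighbor. $K_{a,b}$ is the complete bipartite graph with sides of sizes $a$ and $b$. The period $p(\sigma)$ is the least positive integer $p$ such that $U^{t+p}\sigma=U^t\sigma$ for all sufficiently large $t$, where $U$ is the step operator. *)

From mathcomp Require Import all_boot.
Set Implicit Arguments. Unset Strict Implicit. Unset Printing Implicit Defensive.

(* A simple graph is a symmetric irreflexive relation [e] on a finite type [V].
   A position assigns a number of chips to each vertex. *)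
Definition position (V : finType) := {ffun V -> nat}.

Definition deg (V : finType) (e : rel V) (v : V) : nat := #|[pred u | e v u]|.

Definition fires (V : finType) (e : rel V) (s : position V) (v : V) : bool :=
  deg e v <= s v.

Definition step (V : finType) (e : rel V) (s : position V) : position V :=
  [ffun v => s v - (if fires e s v then deg e v else 0)
             + #|[pred u | e v u && fires e s u]|].

Definition iterU (V : finType) (e : rel V) (t : nat) (s : position V) :=
  iter t (step e) s.

Definition eventually_periodic_with (V : finType) (e : rel V)
    (s : position V) (p : nat) : Prop :=
  exists T, forall t, T <= t -> iterU e (t + p) s = iterU e t s.

Definition is_period (V : finType) (e : rel V) (s : position V) (p : nat) : Prop :=
  0 < p /\ eventually_periodic_with e s p /\
  (forall q, 0 < q -> q < p -> ~ eventually_periodic_with e s q).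

Definition Kab_vert (a b : nat) : finType := ('I_a + 'I_b)%type.

Definition Kab (a b : nat) : rel (Kab_vert a b) :=
  fun x y => match x, y with
             | inl _, inr _ => true
             | inr _, inl _ => true
             | _, _ => false
             end.
Arguments Kab : clear implicits.

(* A vertex of degree d that receives at most d chips per step either holds at
   least 2d chips forever, and then it is eventually constant, so that all its
   neighbours fire at every step and the game becomes stationary; or it
   eventually holds fewer than 2d chips, and from then on it has fired exactly
   floor((x0 + received) / d) times.  In the second regime the cumulative
   firing counts X and Y of the two sides of K_{a,b} satisfy X(t+1) = G(Y t)
   and Y(t+1) = H(X t), where G and H are monotone with G(n + b) = G n + a and
   H(n + a) = H n + b: the two-step map H o G lifts a degree-one circle map on
   Z/b.  Pigeonholing residues modulo b, and modulo a through G o H, gives a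
   translation period q <= min(a, b) of the even orbit of Y, and a rotation
   number argument transfers it to the odd orbit.  Hence every position has an
   eventual period dividing 2q, that is p = i or p = 2i with i <= min(a, b).
   Conversely, rotating which class of vertices is at its threshold, either on
   both sides at once or alternately, yields positions of period i and 2i. *)

From Stdlib Require Import Classical Wf_nat.
From mathcomp Require Import all_boot zify.
Set Implicit Arguments. Unset Strict Implicit. Unset Printing Implicit Defensive.

Lemma sum_nat_of_bool n (P : pred 'I_n) : \sum_(i < n) (P i : nat) = #|[pred i | P i]|.
Proof.
by rewrite -sum1_card [RHS]big_mkcond; apply: eq_bigr => i _; rewrite inE; case: (P i).
Qed.

Lemma card_ord_full n (P : pred 'I_n) : #|[pred i | P i]| = n <-> forall i, P i.
Proof.
split=> [P_card i|P_all]; last first.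
  by rewrite -[RHS](card_ord n); apply: eq_card => i; rewrite !inE P_all.
have: [pred i | P i] =i predT.
  by apply/subset_cardP; [rewrite P_card card_ord | apply/subsetP].
by move/(_ i); rewrite !inE.
Qed.

Lemma eventually_forall_fin (I : finType) (Q : I -> nat -> Prop) :
  (forall i, exists T, forall t, T <= t -> Q i t) ->
  exists T, forall i t, T <= t -> Q i t.
Proof.
move=> /fin_all_exists [T QT]; exists (\max_i T i) => i t le_t.
by apply: QT; apply: leq_trans le_t; apply: leq_bigmax.
Qed.

Lemma card_ord_geq n m : m <= n -> #|[pred w : 'I_n | m <= w]| = n - m.
Proof.
move=> le_mn; rewrite -sum_nat_of_bool -(big_mkord xpredT (fun w => (m <= w : nat))).
rewrite (big_cat_nat (leq0n m) le_mn) /= big_nat_cond big1 => [|w]; last first.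
  by case/andP=> /andP [_ lt_wm] _; rewrite leqNgt lt_wm.
rewrite add0n (eq_big_nat _ _ (F2 := fun _ => 1)) => [|w /andP [-> _] //].
by rewrite sum_nat_const_nat muln1.
Qed.

Lemma nonincreasing_eventually_constant (x : nat -> nat) :
  (forall t, x t.+1 <= x t) -> exists T, forall t, T <= t -> x t = x T.
Proof.
move=> x_dec.
have x_homo s t : s <= t -> x t <= x s.
  move=> /subnK <-; elim: (t - s) => // k IH.
  by apply: leq_trans IH; rewrite addSn.
have := @dec_inh_nat_subset_has_unique_least_element
  (fun v => exists t, x t = v) (fun v => classic _).
move=> /(_ (ex_intro _ (x 0) (ex_intro _ 0 erefl))) [v [[[T xT] v_min] _]].
exists T => t leTt; apply/eqP; rewrite eqn_leq x_homo // xT.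
by apply/leP/v_min; exists t.
Qed.

Definition partial_sum (c : nat -> nat) t := \sum_(r < t) c r.

Lemma partial_sumS c t : partial_sum c t.+1 = partial_sum c t + c t.
Proof. by rewrite /partial_sum big_ord_recr. Qed.

Lemma partial_sum_homo c : {homo partial_sum c : s t / s <= t}.
Proof.
apply: homo_leq => [//|? ? ? /leq_trans/[apply]//|t].
by rewrite partial_sumS leq_addr.
Qed.

Section VertexDynamics.

Variables (d : nat) (c x : nat -> nat).
Hypothesis x_rec : forall t, x t.+1 = x t - (if d <= x t then d else 0) + c t.

Definition fire_count t := partial_sum (fun r => d <= x r : nat) t.

Lemma chips_conservation t : x t + d * fire_count t = x 0 + partial_sum c t.
Proof.
elim: t => [|t IH]; first by rewrite /fire_count /partial_sum !big_ord0 muln0.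
rewrite /fire_count !partial_sumS -/(fire_count t) x_rec; case: (leqP d (x t)) => /=; lia.
Qed.

Lemma fire_count_lt_double t :
  0 < d -> x t < 2 * d -> fire_count t.+1 = (x 0 + partial_sum c t) %/ d.
Proof.
move=> d_gt0 x_lt; rewrite -chips_conservation /fire_count partial_sumS -/(fire_count t).
rewrite mulnC divnDMl // addnC; congr (_ + _).
case: (leqP d (x t)) => /= x_ge; last by rewrite divn_small.
by rewrite -[x t](subnK x_ge) divnDr // divnn d_gt0 divn_small; lia.
Qed.

Lemma chips_lt_double_next t :
  0 < d -> x t < 2 * d -> x t.+1 = (x 0 + partial_sum c t) %% d + c t.
Proof.
move=> d_gt0 x_lt; have := chips_conservation t.+1.
rewrite fire_count_lt_double // partial_sumS.
have := divn_eq (x 0 + partial_sum c t) d.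
move: (_ %/ d) (_ %% d) => q r; lia.
Qed.

Lemma chips_eventually_periodic T P j :
  0 < d -> (forall t, T <= t -> x t < 2 * d) ->
  (forall t, T <= t -> partial_sum c (t + P) = partial_sum c t + j * d) ->
  forall t, T <= t -> x (t + P).+1 = x t.+1.
Proof.
move=> d_gt0 x_lt c_sh t le_Tt.
rewrite !chips_lt_double_next ?x_lt ?(leq_trans le_Tt (leq_addr _ _)) //.
have c_per : c (t + P) = c t.
  by have := c_sh t.+1 (leqW le_Tt); rewrite addSn !partial_sumS c_sh //; lia.
by rewrite c_sh // addnA [_ + j * d]addnC modnMDl c_per.
Qed.

Hypothesis c_le : forall t, c t <= d.

Lemma chips_lt_double_stable t t' : t <= t' -> x t < 2 * d -> x t' < 2 * d.
Proof.
move=> /subnK <-; elim: (t' - t) => [//|k IH] /IH.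
by rewrite addSn x_rec; have := c_le (k + t); case: ifP; lia.
Qed.

Lemma always_double_full_input :
  (forall t, 2 * d <= x t) -> exists T, forall t, T <= t -> c t = d.
Proof.
move=> x_ge.
have [|T x_const] := nonincreasing_eventually_constant (x := x).
  by move=> t; rewrite x_rec; have := x_ge t; have := c_le t; case: ifP; lia.
exists T => t leTt; have := x_rec t.
rewrite x_const ?(leq_trans leTt) // x_const //.
by have := x_ge T; have := c_le t; case: ifP; lia.
Qed.

Lemma full_input_or_eventually_lt_double :
  (exists T, forall t, T <= t -> c t = d) \/ (exists T, forall t, T <= t -> x t < 2 * d).
Proof.
case: (classic (forall t, 2 * d <= x t)) => [x_ge|/not_all_ex_not [t /negP]].
  by left; apply: always_double_full_input.
by rewrite -ltnNge => x_lt; right; exists t => t'; move/chips_lt_double_stable; apply.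
Qed.

End VertexDynamics.

Definition shift_by (f : nat -> nat) m m' := forall n, f (n + m) = f n + m'.

Lemma shift_byM f m m' : shift_by f m m' -> forall n j, f (n + j * m) = f n + j * m'.
Proof.
move=> f_sh n; elim=> [|j IH]; first by rewrite !mul0n !addn0.
by rewrite mulSn addnCA addnC f_sh IH; lia.
Qed.

Lemma shift_by_comp f g m1 m2 m3 :
  shift_by f m1 m2 -> shift_by g m2 m3 -> shift_by (g \o f) m1 m3.
Proof. by move=> f_sh g_sh n /=; rewrite f_sh g_sh. Qed.

Lemma shift_by_iter f m k : shift_by f m m -> shift_by (iter k f) m m.
Proof. by move=> f_sh; elim: k => [|k IH] n //=; rewrite IH f_sh. Qed.

Lemma homo_iter f k : {homo f : x y / x <= y} -> {homo iter k f : x y / x <= y}.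
Proof. by move=> f_homo; elim: k => [|k IH] x y //= /IH /f_homo. Qed.

Lemma iter_orbit f (w : nat -> nat) :
  (forall s, w s.+1 = f (w s)) -> forall k s, w (k + s) = iter k f (w s).
Proof. by move=> w_rec; elim=> [|k IH] s //=; rewrite addSn w_rec IH. Qed.

Lemma iter_shifted f m j : shift_by f m m ->
  forall z, f z = z + j * m -> forall k, iter k f z = z + k * j * m.
Proof.
move=> f_sh z fz; elim=> [|k IH]; first by rewrite !mul0n addn0.
rewrite iterS IH (shift_byM f_sh) fz; lia.
Qed.

Section ShiftedOrbit.

Variables (f : nat -> nat) (m : nat) (w : nat -> nat).
Hypotheses (m_gt0 : 0 < m) (f_sh : shift_by f m m).
Hypotheses (w_rec : forall s, w s.+1 = f (w s)) (w_homo : {homo w : s t / s <= t}).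

Lemma orbit_eventually_shifts :
  exists i d j, 0 < d <= m /\ forall s, i <= s -> w (s + d) = w s + j * m.
Proof.
pose res k : 'I_m := Ordinal (ltn_pmod (w k) m_gt0).
have /injectivePn [k1 [k2 k12 /(congr1 val) /= eq_res]] :
    ~~ injectiveb (res \o val : 'I_m.+1 -> 'I_m).
  by apply/injectiveP => /leq_card; rewrite !card_ord ltnn.
wlog lt_k12 : k1 k2 k12 eq_res / k1 < k2.
  move=> wlog_lt; case: (ltngtP k1 k2) => [|lt_k21|/val_inj eq_k12]; first exact: wlog_lt.
    by apply: (wlog_lt k2 k1); rewrite // eq_sym.
  by rewrite eq_k12 eqxx in k12.
have w_le : w k1 <= w k2 by apply/w_homo/ltnW.
have /dvdnP [j w_diff] : m %| w k2 - w k1 by rewrite -eqn_mod_dvd // eq_res.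
exists k1, (k2 - k1), j; split; first by have := ltn_ord k2; lia.
move=> s le_k1s.
have -> : s + (k2 - k1) = (s - k1) + k2 by lia.
rewrite {2}(_ : s = (s - k1) + k1); last by lia.
rewrite !(iter_orbit w_rec) (_ : w k2 = w k1 + j * m); last by lia.
by rewrite (shift_byM (shift_by_iter _ f_sh)).
Qed.

End ShiftedOrbit.

Lemma periodic_point_shift f m y y' j d e :
  0 < m -> {homo f : x y / x <= y} -> shift_by f m m ->
  f y = y + j * m -> y <= y' -> 0 < d -> iter d f y' = y' + e * m ->
  f y' = y' + j * m.
Proof.
move=> m_gt0 f_homo f_sh fy le_yy' d_gt0 fd_y'.
set q := (y' - y) %/ m; set r := (y' - y) %% m.
have r_lt : r < m by apply: ltn_pmod.
have y'E : y' = y + q * m + r by rewrite /r /q -addnA -divn_eq; lia.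
have f_lo : f (y + q * m) = y + q * m + j * m by rewrite (shift_byM f_sh) fy; lia.
have f_hi : f (y + q * m + m) = y + q * m + m + j * m by rewrite f_sh f_lo; lia.
(* Bracketing y + q m <= y' <= y + (q + 1) m forces the rotation number e / d
   of y' to equal j; then f y' > y' + j m or f y' < y' + j m would propagate
   strictly along the orbit by monotonicity. *)
have e_eq : e = d * j.
  have lo := homo_iter d f_homo (leq_addr r (y + q * m)).
  have hi := homo_iter d f_homo (_ : y + q * m + r <= y + q * m + m).
  rewrite -y'E fd_y' (iter_shifted f_sh f_lo) in lo.
  rewrite -y'E fd_y' (iter_shifted f_sh f_hi) in hi.
  case: (posnP r) => [r0|r_gt0].
    by move: fd_y'; rewrite y'E r0 addn0 (iter_shifted f_sh f_lo); nia.
  have {}hi : y' + e * m <= y + q * m + m + d * j * m by apply: hi; lia.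
  nia.
subst e.
have [lt_f|lt_f|//] := ltngtP (y' + j * m) (f y').
  have above k : y' + k.+1 * j * m < iter k.+1 f y'.
    elim: k => [|k IH]; first by rewrite mul1n.
    rewrite iterS; apply: leq_trans (f_homo _ _ (ltnW IH)).
    by rewrite (shift_byM f_sh); lia.
  by have := above d.-1; rewrite prednK // fd_y'; lia.
have below k : iter k.+1 f y' < y' + k.+1 * j * m.
  elim: k => [|k IH]; first by rewrite mul1n.
  rewrite iterS; apply: leq_ltn_trans (f_homo _ _ (ltnW IH)) _.
  by rewrite (shift_byM f_sh); lia.
by have := below d.-1; rewrite prednK // fd_y'; lia.
Qed.

Section AlternatingOrbits.

Variables (a b : nat) (G H X Y : nat -> nat).
Hypotheses (a_gt0 : 0 < a) (b_gt0 : 0 < b).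
Hypotheses (G_sh : shift_by G b a) (H_sh : shift_by H a b).
Hypotheses (G_homo : {homo G : x y / x <= y}) (H_homo : {homo H : x y / x <= y}).
Hypotheses (X_rec : forall t, X t.+1 = G (Y t)) (Y_rec : forall t, Y t.+1 = H (X t)).
Hypotheses (X_homo : {homo X : s t / s <= t}) (Y_homo : {homo Y : s t / s <= t}).

Let psi := H \o G.
Let psi_sh : shift_by psi b b := shift_by_comp G_sh H_sh.
Let psi_homo : {homo psi : x y / x <= y}.
Proof. by move=> x y /G_homo /H_homo. Qed.

Let Yeven s := Y (2 * s).
Let Yodd s := Y (2 * s).+1.
Let Xodd s := X (2 * s).+1.

Let Yeven_rec s : Yeven s.+1 = psi (Yeven s).
Proof. by rewrite /Yeven /psi /= -X_rec -Y_rec mulnS. Qed.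

Let Yeven_succ s : Yeven s.+1 = H (Xodd s).
Proof. by rewrite /Yeven /Xodd -Y_rec mulnS. Qed.

Let Yodd_rec s : Yodd s.+1 = psi (Yodd s).
Proof. by rewrite /Yodd /psi /= -X_rec -Y_rec mulnS. Qed.

Let Xodd_rec s : Xodd s.+1 = G (H (Xodd s)).
Proof. by rewrite /Xodd -Y_rec -X_rec mulnS. Qed.

Let Yeven_homo : {homo Yeven : s t / s <= t}.
Proof. by move=> s t le_st; apply: Y_homo; rewrite leq_mul2l le_st orbT. Qed.

Let Yodd_homo : {homo Yodd : s t / s <= t}.
Proof. by move=> s t le_st; apply: Y_homo; rewrite ltnS leq_mul2l le_st orbT. Qed.

Let Xodd_homo : {homo Xodd : s t / s <= t}.
Proof. by move=> s t le_st; apply: X_homo; rewrite ltnS leq_mul2l le_st orbT. Qed.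

(* Pigeonholing residues gives a shift period d1 <= b of Yeven and a shift
   period d2 <= a of Xodd, which H transports to Yeven; take the smaller. *)
Let Yeven_eventually_shifts :
  exists q j S, [/\ 0 < q, q <= a, q <= b &
    forall s, S <= s -> Yeven (s + q) = Yeven s + j * b].
Proof.
have [i1 [d1 [j1 [/andP [d1_gt0 d1_le] Yeven_sh]]]] :=
  orbit_eventually_shifts b_gt0 psi_sh Yeven_rec Yeven_homo.
have [i2 [d2 [j2 [/andP [d2_gt0 d2_le] Xodd_sh]]]] :=
  orbit_eventually_shifts a_gt0 (shift_by_comp H_sh G_sh) Xodd_rec Xodd_homo.
have {}Xodd_sh s : i2 < s -> Yeven (s + d2) = Yeven s + j2 * b.
  case: s => [//|s] lt_i2s.
  by rewrite addSn !Yeven_succ Xodd_sh // (shift_byM H_sh).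
case: (leqP d1 d2) => [le_d12|lt_d21].
  by exists d1, j1, i1; split=> //; apply: leq_trans d2_le.
by exists d2, j2, i2.+1; split=> //; apply: leq_trans (ltnW lt_d21) d1_le.
Qed.

Lemma alternating_orbits_shift :
  exists q j T, [/\ 0 < q, q <= a, q <= b &
    forall t, T <= t -> Y (t + 2 * q) = Y t + j * b].
Proof.
have [q [j [S [q_gt0 q_le_a q_le_b Yeven_sh]]]] := Yeven_eventually_shifts.
have [i3 [d3 [c3 [/andP [d3_gt0 _] Yodd_sh3]]]] :=
  orbit_eventually_shifts b_gt0 psi_sh Yodd_rec Yodd_homo.
pose f := iter q psi.
have f_Yeven : f (Yeven S) = Yeven S + j * b by rewrite /f -iter_orbit // addnC Yeven_sh.
(* Yeven S has rotation number j under f; the odd orbit lies above it and is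
   periodic modulo b, so it has the same rotation number. *)
have Yodd_sh s : maxn S i3 <= s -> Yodd (s + q) = Yodd s + j * b.
  rewrite geq_max => /andP [le_Ss le_i3s].
  rewrite addnC (iter_orbit Yodd_rec).
  apply: (periodic_point_shift b_gt0 (homo_iter q psi_homo) (shift_by_iter q psi_sh) f_Yeven
            _ d3_gt0 (e := q * c3)).
    by apply: leq_trans (Yeven_homo le_Ss) _; apply: Y_homo.
  have Yodd_per : iter d3 psi (Yodd s) = Yodd s + c3 * b.
    by rewrite -iter_orbit // addnC Yodd_sh3.
  by rewrite -iterM [d3 * q]mulnC iterM (iter_shifted (shift_by_iter d3 psi_sh) Yodd_per).
exists q, j, (2 * maxn S i3); split=> // t le_t.
have [s [t_eq | t_eq]] : exists s, t = 2 * s \/ t = (2 * s).+1.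
  by exists t./2; have := odd_double_half t; rewrite -mul2n; case: (odd t); lia.
  by have := Yeven_sh s; rewrite t_eq /Yeven mulnDr => -> //; lia.
by have := Yodd_sh s; rewrite t_eq /Yodd mulnDr addSn => -> //; lia.
Qed.

End AlternatingOrbits.

Definition floor_sum k (c : 'I_k -> nat) d n := \sum_(i < k) (c i + n) %/ d.

Lemma floor_sum_shift k c d : 0 < d -> shift_by (@floor_sum k c d) d k.
Proof.
move=> d_gt0 n; rewrite /floor_sum.
rewrite (eq_bigr (fun i => (c i + n) %/ d + 1)) => [|i _]; last first.
  by rewrite addnA divnDr // divnn d_gt0.
by rewrite big_split /= sum_nat_const card_ord muln1.
Qed.

Lemma floor_sum_homo k c d : {homo @floor_sum k c d : x y / x <= y}.
Proof. by move=> x y le_xy; apply: leq_sum => i _; rewrite leq_div2r // leq_add2l. Qed.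

Section Period.

Variables (V : finType) (e : rel V) (s : position V).

Lemma iterU_period_mul p T : (forall t, T <= t -> iterU e (t + p) s = iterU e t s) ->
  forall k t, T <= t -> iterU e (t + k * p) s = iterU e t s.
Proof.
move=> per; elim=> [|k IH] t le_t; first by rewrite mul0n addn0.
by rewrite mulSn addnCA addnC per ?IH // (leq_trans le_t (leq_addr _ _)).
Qed.

Lemma eventually_periodic_mul p k :
  eventually_periodic_with e s p -> eventually_periodic_with e s (k * p).
Proof. by move=> [T per]; exists T; apply: iterU_period_mul. Qed.

Lemma period_dvdn p n : is_period e s p -> eventually_periodic_with e s n -> p %| n.
Proof.
move=> [p_gt0 [[T1 per_p] p_min]] [T2 per_n].
apply/negPn/negP; rewrite -lt0n => r_gt0.
apply: (p_min (n %% p) r_gt0 (ltn_pmod n p_gt0)).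
exists (maxn T1 T2) => t; rewrite geq_max => /andP [le_T1 le_T2].
rewrite -(iterU_period_mul per_p (n %/ p) (leq_trans le_T1 (leq_addr _ _))).
by rewrite -addnA [n %% p + _]addnC -divn_eq per_n.
Qed.

Lemma is_period_cycle p : 0 < p -> iterU e p s = s ->
  (forall q, 0 < q -> q < p -> iterU e q s <> s) -> is_period e s p.
Proof.
move=> p_gt0 cyc p_min.
have per t : iterU e (t + p) s = iterU e t s.
  by rewrite /iterU iterD -/(iterU e p s) cyc.
have cyc_mul k : iterU e (k * p) s = s.
  by rewrite -[k * p]add0n (iterU_period_mul (T := 0)).
split=> //; split; first by exists 0.
move=> q q_gt0 lt_qp [T per_q]; apply: (p_min q q_gt0 lt_qp).
have := per_q (T * p) (leq_pmulr _ p_gt0).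
by rewrite addnC /iterU iterD -/(iterU e (T * p) s) cyc_mul.
Qed.

End Period.

Lemma dvdn_double_cases p q : 0 < q -> p %| 2 * q ->
  exists i, [/\ 1 <= i, i <= q & (p = i \/ p = 2 * i)].
Proof.
move=> q_gt0 p_dvd; have p_gt0 : 0 < p by apply: dvdn_gt0 p_dvd; rewrite muln_gt0.
case: (boolP (odd p)) => [p_odd|p_even].
  have p_dvd_q : p %| q by rewrite -(@Gauss_dvdr p 2 q) // coprimen2 p_odd.
  by exists p; split; [| apply: dvdn_leq | left].
have pE : p = 2 * p./2 by rewrite -[LHS]odd_double_half (negbTE p_even) add0n -mul2n.
exists p./2; split; [lia | | by right].
by apply: dvdn_leq q_gt0 _; rewrite -(@dvdn_pmul2l 2) // -pE.
Qed.

Section CompleteBipartite.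

Variables a b : nat.
Implicit Types (s : position (Kab_vert a b)) (P : pred (Kab_vert a b)).

Lemma card_Kab_inl u P :
  #|[pred y | Kab a b (inl u) y && P y]| = #|[pred w : 'I_b | P (inr w)]|.
Proof.
rewrite -(card_image (@inr_inj 'I_a 'I_b)); apply: eq_card => -[v|w]; rewrite !inE /=.
  by apply/esym/negbTE/imageP => -[].
by rewrite (mem_image (@inr_inj 'I_a 'I_b)) inE.
Qed.

Lemma card_Kab_inr w P :
  #|[pred y | Kab a b (inr w) y && P y]| = #|[pred u : 'I_a | P (inl u)]|.
Proof.
rewrite -(card_image (@inl_inj 'I_a 'I_b)); apply: eq_card => -[v|v]; rewrite !inE /=.
  by rewrite (mem_image (@inl_inj 'I_a 'I_b)) inE.
by apply/esym/negbTE/imageP => -[].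
Qed.

Lemma deg_inl u : deg (Kab a b) (inl u) = b.
Proof.
rewrite /deg -[RHS](card_ord b) -(card_Kab_inl u predT).
by apply: eq_card => y; rewrite !inE andbT.
Qed.

Lemma deg_inr w : deg (Kab a b) (inr w) = a.
Proof.
rewrite /deg -[RHS](card_ord a) -(card_Kab_inr w predT).
by apply: eq_card => y; rewrite !inE andbT.
Qed.

Definition nfire_left s := #|[pred u : 'I_a | b <= s (inl u)]|.
Definition nfire_right s := #|[pred w : 'I_b | a <= s (inr w)]|.

Lemma nfire_left_le s : nfire_left s <= a.
Proof. by rewrite -[a in _ <= a]card_ord max_card. Qed.

Lemma nfire_right_le s : nfire_right s <= b.
Proof. by rewrite -[b in _ <= b]card_ord max_card. Qed.

Lemma step_inl s u :
  step (Kab a b) s (inl u) = s (inl u) - (if b <= s (inl u) then b else 0) + nfire_right s.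
Proof.
rewrite ffunE /fires deg_inl card_Kab_inl.
by congr (_ + _); apply: eq_card => w; rewrite !inE /fires deg_inr.
Qed.

Lemma step_inr s w :
  step (Kab a b) s (inr w) = s (inr w) - (if a <= s (inr w) then a else 0) + nfire_left s.
Proof.
rewrite ffunE /fires deg_inr card_Kab_inr.
by congr (_ + _); apply: eq_card => u; rewrite !inE /fires deg_inl.
Qed.

End CompleteBipartite.

Section Trajectory.

Variables (a b : nat) (s0 : position (Kab_vert a b)).
Hypotheses (a_gt0 : 0 < a) (b_gt0 : 0 < b).

Definition traj t := iterU (Kab a b) t s0.
Definition fired_left t := partial_sum (fun r => nfire_left (traj r)) t.
Definition fired_right t := partial_sum (fun r => nfire_right (traj r)) t.

Lemma traj_inl_rec u t : traj t.+1 (inl u) =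
  traj t (inl u) - (if b <= traj t (inl u) then b else 0) + nfire_right (traj t).
Proof. exact: step_inl. Qed.

Lemma traj_inr_rec w t : traj t.+1 (inr w) =
  traj t (inr w) - (if a <= traj t (inr w) then a else 0) + nfire_left (traj t).
Proof. exact: step_inr. Qed.

Lemma fired_left_sum t :
  fired_left t = \sum_(u < a) fire_count b (fun r => traj r (inl u)) t.
Proof.
rewrite /fire_count /partial_sum exchange_big /=.
by apply: eq_bigr => r _; rewrite sum_nat_of_bool.
Qed.

Lemma fired_right_sum t :
  fired_right t = \sum_(w < b) fire_count a (fun r => traj r (inr w)) t.
Proof.
rewrite /fire_count /partial_sum exchange_big /=.
by apply: eq_bigr => r _; rewrite sum_nat_of_bool.
Qed.

Section BoundedRegime.

Variable t0 : nat.
Hypothesis left_bounded : forall u t, t0 <= t -> traj t (inl u) < 2 * b.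
Hypothesis right_bounded : forall w t, t0 <= t -> traj t (inr w) < 2 * a.

Let G := floor_sum (fun u => s0 (inl u)) b.
Let H := floor_sum (fun w => s0 (inr w)) a.

Lemma fired_left_bounded t : t0 <= t -> fired_left t.+1 = G (fired_right t).
Proof.
move=> le_t; rewrite fired_left_sum; apply: eq_bigr => u _.
by apply: fire_count_lt_double (traj_inl_rec u) _ b_gt0 (left_bounded u le_t).
Qed.

Lemma fired_right_bounded t : t0 <= t -> fired_right t.+1 = H (fired_left t).
Proof.
move=> le_t; rewrite fired_right_sum; apply: eq_bigr => w _.
by apply: fire_count_lt_double (traj_inr_rec w) _ a_gt0 (right_bounded w le_t).
Qed.

Lemma fired_right_eventually_shifts :
  exists q j T, [/\ 0 < q, q <= a, q <= b &
    forall t, T <= t -> fired_right (t + 2 * q) = fired_right t + j * b].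
Proof.
pose X t := fired_left (t0 + t); pose Y t := fired_right (t0 + t).
have X_rec t : X t.+1 = G (Y t) by rewrite /X addnS fired_left_bounded ?leq_addr.
have Y_rec t : Y t.+1 = H (X t) by rewrite /Y addnS fired_right_bounded ?leq_addr.
have X_homo : {homo X : s t / s <= t}.
  by move=> s t le_st; apply: partial_sum_homo; rewrite leq_add2l.
have Y_homo : {homo Y : s t / s <= t}.
  by move=> s t le_st; apply: partial_sum_homo; rewrite leq_add2l.
have [q [j [T [q_gt0 q_le_a q_le_b Y_sh]]]] := alternating_orbits_shift a_gt0 b_gt0
  (floor_sum_shift _ b_gt0) (floor_sum_shift _ a_gt0) (@floor_sum_homo _ _ _)
  (@floor_sum_homo _ _ _) X_rec Y_rec X_homo Y_homo.
exists q, j, (t0 + T); split=> // t le_t.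
have le_t0 : t0 <= t by lia.
by have := Y_sh (t - t0); rewrite /Y addnA subnKC // => -> //; lia.
Qed.

Lemma traj_bounded_eventually_periodic :
  exists q, [/\ 0 < q, q <= minn a b & eventually_periodic_with (Kab a b) s0 (2 * q)].
Proof.
have [q [j [T [q_gt0 q_le_a q_le_b Y_sh]]]] := fired_right_eventually_shifts.
set T' := maxn t0 T.
have {}Y_sh t : T' <= t -> fired_right (t + 2 * q) = fired_right t + j * b.
  by rewrite geq_max => /andP [_]; apply: Y_sh.
have X_sh t : T' < t -> fired_left (t + 2 * q) = fired_left t + j * a.
  case: t => [//|t] lt_t; have le_t0 : t0 <= t by lia.
  rewrite addSn !fired_left_bounded ?(leq_trans le_t0 (leq_addr _ _)) //.
  by rewrite Y_sh // /G (shift_byM (floor_sum_shift _ b_gt0)).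
exists q; split; first by []; first by rewrite leq_min q_le_a q_le_b.
exists T'.+2 => -[//|t] le_t; apply/ffunP => -[u|w].
  apply: (chips_eventually_periodic (traj_inl_rec u) b_gt0 _ Y_sh); last by lia.
  by move=> t' /(leq_trans (leq_maxl _ _)); apply: left_bounded.
apply: (chips_eventually_periodic (traj_inr_rec w) a_gt0 _ X_sh); last by lia.
by move=> t' /ltnW /(leq_trans (leq_maxl _ _)); apply: right_bounded.
Qed.

End BoundedRegime.

Lemma nfire_left_full_right T :
  (forall t, T <= t -> nfire_left (traj t) = a) -> forall t, T < t -> nfire_right (traj t) = b.
Proof.
move=> left_full [//|t] lt_t; apply/card_ord_full => w.
by rewrite traj_inr_rec left_full //; case: ifP; lia.
Qed.

Lemma nfire_right_full_stationary T :
  (forall t, T <= t -> nfire_right (traj t) = b) -> eventually_periodic_with (Kab a b) s0 1.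
Proof.
move=> right_full.
have left_fire t u : T < t -> b <= traj t (inl u).
  by case: t => [//|t] lt_t; rewrite traj_inl_rec right_full //; case: ifP; lia.
have left_full t : T < t -> nfire_left (traj t) = a.
  by move=> lt_t; apply/card_ord_full => u; apply: left_fire.
have right_fire t w : T <= t -> a <= traj t (inr w).
  by move/right_full/card_ord_full; apply.
exists T.+1 => t lt_t; rewrite addn1; change (traj t.+1 = traj t).
apply/ffunP => -[u|w].
  by rewrite traj_inl_rec left_fire // right_full ?subnK ?left_fire //; lia.
by rewrite traj_inr_rec right_fire ?left_full ?subnK ?right_fire //; lia.
Qed.

Lemma traj_eventually_periodic_double :
  exists q, [/\ 0 < q, q <= minn a b & eventually_periodic_with (Kab a b) s0 (2 * q)].
Proof.
have stationary : eventually_periodic_with (Kab a b) s0 1 ->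
    exists q, [/\ 0 < q, q <= minn a b & eventually_periodic_with (Kab a b) s0 (2 * q)].
  move=> per1; exists 1; split; rewrite ?leq_min ?a_gt0 ?b_gt0 //.
  by rewrite -[2 * 1]muln1; apply: eventually_periodic_mul.
case: (classic (exists T, forall t, T <= t -> nfire_right (traj t) = b)).
  by move=> [T right_full]; apply/stationary/(nfire_right_full_stationary right_full).
move=> not_right_full.
case: (classic (exists T, forall t, T <= t -> nfire_left (traj t) = a)).
  move=> [T left_full]; apply/stationary.
  exact: (nfire_right_full_stationary (nfire_left_full_right left_full)).
move=> not_left_full.
have [tl left_bounded] : exists T, forall u t, T <= t -> traj t (inl u) < 2 * b.
  apply: eventually_forall_fin => u.
  by case: (full_input_or_eventually_lt_double (traj_inl_rec u) (fun _ => nfire_right_le _)).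
have [tr right_bounded] : exists T, forall w t, T <= t -> traj t (inr w) < 2 * a.
  apply: eventually_forall_fin => w.
  by case: (full_input_or_eventually_lt_double (traj_inr_rec w) (fun _ => nfire_left_le _)).
apply: (traj_bounded_eventually_periodic (t0 := maxn tl tr)) => [u|w] t.
  by move/(leq_trans (leq_maxl _ _)); apply: left_bounded.
by move/(leq_trans (leq_maxr _ _)); apply: right_bounded.
Qed.

End Trajectory.

Section ClassCounting.

Variable i : nat.
Hypothesis i_gt0 : 0 < i.

Definition class_size n g := if g < i.-1 then 1 else n - i.-1.

Lemma card_class n (P : pred nat) k : i <= n -> k <= i.-1 ->
  (forall g, g <= i.-1 -> P g = (g == k)) ->
  #|[pred w : 'I_n | P (minn w i.-1)]| = class_size n k.
Proof.
move=> i_le_n le_k P_k; rewrite (eq_card (B := [pred w : 'I_n | minn w i.-1 == k])); last first.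
  by move=> w; rewrite !inE P_k // geq_minr.
rewrite /class_size; case: ifP => [lt_k|/negbT k_last].
  have lt_kn : k < n by lia.
  rewrite -(card1 (Ordinal lt_kn)); apply: eq_card => w; rewrite !inE -val_eqE /=.
  by case: (leqP w i.-1) => [le_w|lt_w]; rewrite ?(minn_idPl le_w) ?(minn_idPr (ltnW lt_w)); lia.
rewrite -card_ord_geq; last by lia.
by apply: eq_card => w; rewrite !inE; apply/eqP/idP; lia.
Qed.

Lemma card_class0 n (P : pred nat) :
  (forall g, g <= i.-1 -> ~~ P g) -> #|[pred w : 'I_n | P (minn w i.-1)]| = 0.
Proof. by move=> P_none; apply: eq_card0 => w; rewrite !inE (negbTE (P_none _ (geq_minr _ _))). Qed.

(* The chips of class g at time t of the rotation: class t holds exactly d. *)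
Definition rot d t g := if t <= g then d - g + t else t - g.
Definition rot_fired d t g := if t < g then d - g + t else t - g.

Lemma rot_fire d t g : i <= d -> t <= i.-1 -> g <= i.-1 -> (d <= rot d t g) = (g == t).
Proof. by rewrite /rot; case: ifP; lia. Qed.

Lemma rot_fired_lt d t g : i <= d -> t <= i.-1 -> g <= i.-1 -> rot_fired d t g < d.
Proof. by rewrite /rot_fired; case: ifP; lia. Qed.

Lemma rot_step d t g : i <= d -> t <= i.-1 -> g <= i.-1 ->
  rot d t g - (if d <= rot d t g then d else 0) = rot_fired d t g.
Proof.
move=> i_le_d le_t le_g; rewrite (rot_fire i_le_d le_t le_g) /rot /rot_fired.
by case: eqP => [->|?]; repeat case: ifP => ?; lia.
Qed.

Lemma rot_fired_next d t g : i <= d -> t <= i.-1 -> g <= i.-1 ->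
  rot_fired d t g + class_size d t = rot d (t.+1 %% i) g.
Proof.
move=> i_le_d le_t le_g; rewrite /rot_fired /rot /class_size.
case: (ltnP t i.-1) => [lt_t|ge_t].
  by rewrite modn_small; [repeat case: ifP => ?; lia | lia].
have -> : t.+1 = i by lia.
by rewrite modnn /=; repeat case: ifP => ?; lia.
Qed.

Lemma rot_pred_lt d t g : i <= d -> t <= i.-1 -> g <= i.-1 -> (rot d t g).-1 < d.
Proof. by rewrite /rot; case: ifP; lia. Qed.

Lemma rot_pred_fire d t g : i <= d -> t <= i.-1 -> g <= i.-1 ->
  (d <= (rot d t g).-1 + class_size d t) = (g == t).
Proof. by rewrite /rot /class_size; case: eqP => [->|?]; repeat case: ifP => ?; lia. Qed.

Lemma rot_pred_next d t g : i <= d -> t <= i.-1 -> g <= i.-1 ->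
  (rot d t g).-1 + class_size d t - (if g == t then d else 0) = (rot d (t.+1 %% i) g).-1.
Proof.
move=> i_le_d le_t le_g; rewrite -rot_fired_next // -(rot_step i_le_d le_t le_g).
rewrite (rot_fire i_le_d le_t le_g) /rot /class_size.
by case: eqP => [->|?]; repeat case: ifP => ?; lia.
Qed.

End ClassCounting.

Section Constructions.

Variables a b i : nat.
Hypotheses (i_gt0 : 0 < i) (i_le_a : i <= a) (i_le_b : i <= b).

(* Vertices of index at least i - 1 are merged into the last of i classes,
   so the positions below are determined by one value per class and side. *)
Definition class_position (fA fB : nat -> nat) : position (Kab_vert a b) :=
  [ffun v : Kab_vert a b => match v with inl u => fA (minn u i.-1) | inr w => fB (minn w i.-1) end].

Lemma step_class_position fA fB nA nB :
  #|[pred u : 'I_a | b <= fA (minn u i.-1)]| = nA ->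
  #|[pred w : 'I_b | a <= fB (minn w i.-1)]| = nB ->
  step (Kab a b) (class_position fA fB) =
  class_position (fun g => fA g - (if b <= fA g then b else 0) + nB)
                 (fun h => fB h - (if a <= fB h then a else 0) + nA).
Proof.
move=> nA_E nB_E; apply/ffunP => -[u|w]; rewrite ?step_inl ?step_inr !ffunE /=.
  by rewrite -nB_E; congr (_ + _); apply: eq_card => w; rewrite !inE ffunE.
by rewrite -nA_E; congr (_ + _); apply: eq_card => u; rewrite !inE ffunE.
Qed.

Lemma eq_class_position fA fB fA' fB' :
  (forall g, g <= i.-1 -> fA g = fA' g) -> (forall h, h <= i.-1 -> fB h = fB' h) ->
  class_position fA fB = class_position fA' fB'.
Proof. by move=> eqA eqB; apply/ffunP => -[u|w]; rewrite !ffunE ?eqA ?eqB ?geq_minr. Qed.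

Let u0 : 'I_a := Ordinal (leq_trans i_gt0 i_le_a).

Let class_position_u0 fA fB : class_position fA fB (inl u0) = fA 0.
Proof. by rewrite ffunE /= min0n. Qed.

Definition rot_position t := class_position (rot b t) (rot a t).

Lemma step_rot_position t : t <= i.-1 ->
  step (Kab a b) (rot_position t) = rot_position (t.+1 %% i).
Proof.
move=> le_t; rewrite (step_class_position (nA := class_size i a t) (nB := class_size i b t)).
- by apply: eq_class_position => g le_g; rewrite (rot_step i_gt0) ?(rot_fired_next i_gt0).
- by apply: (card_class i_gt0 (P := fun g => b <= rot b t g)) => // g; apply: (rot_fire i_gt0).
- by apply: (card_class i_gt0 (P := fun h => a <= rot a t h)) => // h; apply: (rot_fire i_gt0).
Qed.

Lemma iterU_rot_position k : iterU (Kab a b) k (rot_position 0) = rot_position (k %% i).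
Proof.
elim: k => [|k IH]; first by rewrite mod0n.
rewrite /iterU iterS -/(iterU _ k _) IH step_rot_position; last by have := ltn_pmod k i_gt0; lia.
by rewrite -addn1 modnDml addn1.
Qed.

Lemma rot_position_period : is_period (Kab a b) (rot_position 0) i.
Proof.
apply: is_period_cycle => // [|q q_gt0 lt_qi]; first by rewrite iterU_rot_position modnn.
rewrite iterU_rot_position modn_small // => /ffunP/(_ (inl u0)).
by rewrite !class_position_u0 /rot /=; repeat case: ifP => ?; lia.
Qed.

(* The right side runs one chip short of the rotation, so the two sides fire
   alternately and the rotation advances once every two steps. *)
Definition even_position t := class_position (rot b t) (fun h => (rot a t h).-1).
Definition odd_position t :=
  class_position (rot_fired b t) (fun h => (rot a t h).-1 + class_size i a t).

Lemma step_even_position t : t <= i.-1 ->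
  step (Kab a b) (even_position t) = odd_position t.
Proof.
move=> le_t; rewrite (step_class_position (nA := class_size i a t) (nB := 0)).
- apply: eq_class_position => g le_g; first by rewrite (rot_step i_gt0) ?addn0.
  by rewrite leqNgt (rot_pred_lt i_gt0) ?subn0.
- by apply: (card_class i_gt0 (P := fun g => b <= rot b t g)) => // g; apply: (rot_fire i_gt0).
- apply: (@card_class0 i _ (fun h => a <= (rot a t h).-1)) => h le_h.
  by rewrite -ltnNge (rot_pred_lt i_gt0).
Qed.

Lemma step_odd_position t : t <= i.-1 ->
  step (Kab a b) (odd_position t) = even_position (t.+1 %% i).
Proof.
move=> le_t; rewrite (step_class_position (nA := 0) (nB := class_size i b t)).
- apply: eq_class_position => g le_g.
    by rewrite leqNgt (rot_fired_lt i_gt0) ?subn0 ?(rot_fired_next i_gt0).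
  by rewrite (rot_pred_fire i_gt0) // addn0 -(rot_pred_next i_gt0).
- apply: (@card_class0 i _ (fun g => b <= rot_fired b t g)) => g le_g.
  by rewrite -ltnNge (rot_fired_lt i_gt0).
- apply: (card_class i_gt0 (P := fun h => a <= (rot a t h).-1 + class_size i a t)) => // h.
  exact: (rot_pred_fire i_gt0).
Qed.

Lemma iterU_even_position k :
  iterU (Kab a b) (2 * k) (even_position 0) = even_position (k %% i) /\
  iterU (Kab a b) (2 * k).+1 (even_position 0) = odd_position (k %% i).
Proof.
have lt_mod n : n %% i <= i.-1 by have := ltn_pmod n i_gt0; lia.
elim: k => [|k [IH_even IH_odd]]; first by rewrite mod0n /iterU /= step_even_position.
have even_succ : iterU (Kab a b) (2 * k.+1) (even_position 0) = even_position (k.+1 %% i).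
  rewrite mulnS /iterU iterS -/(iterU _ (2 * k).+1 _) IH_odd step_odd_position //.
  by rewrite -addn1 modnDml addn1.
by rewrite even_succ /iterU iterS -/(iterU _ (2 * k.+1) _) even_succ step_even_position.
Qed.

Lemma even_position_period : is_period (Kab a b) (even_position 0) (2 * i).
Proof.
apply: is_period_cycle => [||q q_gt0 lt_q]; first by lia.
  by rewrite (iterU_even_position i).1 modnn.
have [k [q_eq|q_eq]] : exists k, q = 2 * k \/ q = (2 * k).+1.
  by exists q./2; have := odd_double_half q; rewrite -mul2n; case: (odd q); lia.
  rewrite q_eq (iterU_even_position k).1 modn_small; last by lia.
  move=> /ffunP/(_ (inl u0)); rewrite !class_position_u0 /rot /=.
  by repeat case: ifP => ?; lia.
rewrite q_eq (iterU_even_position k).2 modn_small; last by lia.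
move=> /ffunP/(_ (inl u0)); rewrite !class_position_u0 /rot /rot_fired /=.
by repeat case: ifP => ?; lia.
Qed.

End Constructions.

Theorem theorem3p8 (a b : nat) (ha : 0 < a) (hb : 0 < b) (p : nat) (hp : 0 < p) :
  (exists s : position (Kab_vert a b), is_period (Kab a b) s p) <->
  (exists i, [/\ 1 <= i, i <= minn a b & (p = i \/ p = 2 * i)]).
Proof.
split=> [[s s_per]|[i [i_gt0]]].
  have [q [q_gt0 q_le per_2q]] := traj_eventually_periodic_double s ha hb.
  have [i [i_gt0 i_le_q p_eq]] := dvdn_double_cases q_gt0 (period_dvdn s_per per_2q).
  by exists i; split=> //; apply: leq_trans q_le.
rewrite leq_min => /andP [i_le_a i_le_b] [->|->].
  by exists (rot_position a b i 0); apply: rot_position_period.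
by exists (even_position a b i 0); apply: even_position_period.
Qed.
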